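(* Let $A\in\mathbb Z^{m\times n}$, let $d\in\mathbb N_+$ with $d\leq\min(m,n)$, and let $(K,D,L)$ be a Smith normal form for $A$. If there exists $V\in\mathbb Z^{m\times d}$ whose columns lie in $\operatorname{span}_{\mathbb Z}(A)$ and such that the $\mathbb Z$-span of the columns of $V^T$ is $\mathbb Z^d$, then $\textnormal{1-count}(D)\geq d$.
   Context: A Smith normal form of $A\in\mathbb Z^{m\times n}$ is a triple $(K,D,L)$ with $A=KDL$, $K\in\mathrm{GL}(m,\mathbb Z)$, $L\in\mathrm{GL}(n,\mathbb Z)$, and $D\in\mathbb Z^{m\times n}$ zero except for positive diagonal entries $\mathfrak d_1,\dots,\mathfrak d_r$ in the top-left positions with $\mathfrak d_i\mid\mathfrak d_{i+1}$. $\textnormal{1-count}(D)$ is the number of diagonal entries of $D$ equal to $1$. $\operatorname{span}_{\mathbb Z}(M)$ is the set of integer linear combinations of the columns of $M$. *)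

From HB Require Import structures.
From mathcomp Require Import all_boot all_order all_algebra.
Set Implicit Arguments. Unset Strict Implicit. Unset Printing Implicit Defensive.
Import Order.TTheory GRing.Theory Num.Theory.
Local Open Scope ring_scope.

Definition snf_diag (m n : nat) (D : 'M[int]_(m, n)) : Prop :=
  exists r : nat,
    [/\ (r <= minn m n)%N,
        (forall (i : 'I_m) (j : 'I_n), D i j != 0 -> (i : nat) = j /\ (i < r)%N),
        (forall (i : 'I_m) (j : 'I_n), (i : nat) = j -> (i < r)%N -> 0 < D i j) &
        (forall (i1 i2 : 'I_m) (j1 j2 : 'I_n),
            (i1 : nat) = j1 -> (i2 : nat) = j2 -> i2 = i1.+1 :> nat -> (i2 < r)%N ->
            (D i1 j1 %| D i2 j2)%Z)].

Definition is_smith_normal_form (m n : nat) (A : 'M[int]_(m, n))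
    (K : 'M[int]_m) (D : 'M[int]_(m, n)) (L : 'M[int]_n) : Prop :=
  [/\ A = K *m D *m L, K \in unitmx, L \in unitmx & snf_diag D].

Definition one_count (m n : nat) (D : 'M[int]_(m, n)) : nat :=
  #|[set i : 'I_m | [exists j : 'I_n, ((i : nat) == j) && (D i j == 1)]]|.

Definition zspan (m k : nat) (M : 'M[int]_(m, k)) (v : 'cV[int]_m) : Prop :=
  exists x : 'cV[int]_k, v = M *m x.

From mathcomp Require Import all_boot all_order all_algebra.
Set Implicit Arguments.
Unset Strict Implicit.
Unset Printing Implicit Defensive.

Import Order.TTheory GRing.Theory Num.Theory.
Local Open Scope ring_scope.

(* If the columns of V lie in the span of A and V^T is onto Z^d, then
   V = A X and W^T V = 1 for integer matrices X, W, so with A = K D L we get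
   (W^T K) D (L X) = 1_d.  Reducing modulo a prime p, this forces
   d <= rank (D mod p).  Because of the divisibility chain, choosing p to
   divide the first diagonal entry of D that is not 1 makes D mod p the
   partial identity with exactly as many ones as D has, whence d <= 1-count(D). *)

Lemma zspan_cols (m n k : nat) (A : 'M[int]_(m, n)) (V : 'M[int]_(m, k)) :
  (forall j : 'I_k, zspan A (col j V)) -> exists X : 'M[int]_(n, k), V = A *m X.
Proof.
move=> /fin_all_exists [x Vx]; exists (\matrix_(i, j) x j i 0).
apply/matrixP => i j; have := congr1 (fun v : 'cV_m => v i 0) (Vx j).
by rewrite !mxE => ->; apply: eq_bigr => l _; rewrite mxE.
Qed.

Lemma mulmx1_le_rank_map (R : nzRingType) (F : fieldType) (f : {rmorphism R -> F})
    (d m n : nat) (P : 'M[R]_(d, m)) (D : 'M[R]_(m, n)) (Q : 'M[R]_(n, d)) :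
  P *m D *m Q = 1%:M -> (d <= \rank (map_mx f D))%N.
Proof.
move=> /(congr1 (map_mx f)); rewrite !map_mxM map_mx1.
exact: mulmx1_min_rank.
Qed.

Lemma prime_dvdz_nonunit (z : int) :
  `|z|%N != 1%N -> exists2 p : nat, prime p & (p %| z)%Z.
Proof.
case: (posnP `|z|%N) => [/eqP | z_gt0 z_neq1].
  by rewrite absz_eq0 => /eqP-> _; exists 2%N; rewrite ?dvdz0.
have z_gt1 : (1 < `|z|)%N by rewrite ltn_neqAle eq_sym z_neq1.
by exists (pdiv `|z|); [apply: pdiv_prime | apply: pdiv_dvd].
Qed.

Section SmithDiagonal.

Variables (m n r : nat) (D : 'M[int]_(m, n)).
Hypothesis r_le_min : (r <= minn m n)%N.
Hypothesis D_support :
  forall (i : 'I_m) (j : 'I_n), D i j != 0 -> (i : nat) = j /\ (i < r)%N.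
Hypothesis D_diag_gt0 :
  forall (i : 'I_m) (j : 'I_n), (i : nat) = j -> (i < r)%N -> 0 < D i j.
Hypothesis D_diag_dvd :
  forall (i1 i2 : 'I_m) (j1 j2 : 'I_n),
    (i1 : nat) = j1 -> (i2 : nat) = j2 -> i2 = i1.+1 :> nat -> (i2 < r)%N ->
    (D i1 j1 %| D i2 j2)%Z.

(* Junk value 0 outside the matrix, consistent with D vanishing beyond index r. *)
Definition diag_entry (k : nat) : int :=
  if (insub k : option 'I_m) is Some i then
    if (insub k : option 'I_n) is Some j then D i j else 0
  else 0.

Lemma diag_entryE (i : 'I_m) (j : 'I_n) : (i : nat) = j -> D i j = diag_entry i.
Proof. by move=> eij; rewrite /diag_entry valK eij valK. Qed.

Let r_le_m : (r <= m)%N := leq_trans r_le_min (geq_minl m n).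
Let r_le_n : (r <= n)%N := leq_trans r_le_min (geq_minr m n).
Let lt_r_m k (kr : (k < r)%N) : (k < m)%N := leq_trans kr r_le_m.
Let lt_r_n k (kr : (k < r)%N) : (k < n)%N := leq_trans kr r_le_n.

Lemma diag_entry_ge k : (r <= k)%N -> diag_entry k = 0.
Proof.
rewrite /diag_entry; case: insubP => [i _ <-|_] //; case: insubP => [j _ _|_] rk //.
by apply/eqP; apply: contraTT rk => /D_support[_ ir]; rewrite -ltnNge.
Qed.

Lemma diag_entry_gt0 k : (k < r)%N -> 0 < diag_entry k.
Proof.
move=> kr; rewrite -(@diag_entryE (Ordinal (lt_r_m kr)) (Ordinal (lt_r_n kr))) //.
exact: D_diag_gt0.
Qed.

Lemma diag_entry_dvd k l : (k <= l)%N -> (l < r)%N -> (diag_entry k %| diag_entry l)%Z.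
Proof.
elim: l => [|l IHl]; first by rewrite leqn0 => /eqP->.
rewrite leq_eqVlt => /predU1P[-> // | kl] lr.
apply: dvdz_trans (IHl kl (ltnW lr)) _.
have lr' := ltnW lr.
rewrite -(@diag_entryE (Ordinal (lt_r_m lr')) (Ordinal (lt_r_n lr'))) //.
rewrite -(@diag_entryE (Ordinal (lt_r_m lr)) (Ordinal (lt_r_n lr))) //.
exact: D_diag_dvd.
Qed.

Lemma map_diag_pid_mx (R : nzRingType) (c : nat) :
    (forall k, (k < c)%N -> diag_entry k = 1) ->
    (forall k, (c <= k)%N -> (diag_entry k)%:~R = 0 :> R) ->
  map_mx intr D = pid_mx c :> 'M[R]_(m, n).
Proof.
move=> one_lt_c zero_ge_c; apply/matrixP => i j; rewrite !mxE.
have [eij | nij] /= := eqVneq (i : nat) j.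
  rewrite (diag_entryE eij).
  by have [/one_lt_c-> | /zero_ge_c->] := ltnP i c.
suff -> : D i j = 0 by [].
by apply/eqP; apply: contraNT nij => /D_support[-> _].
Qed.

Lemma one_count_ge (c : nat) : (c <= m)%N -> (c <= n)%N ->
  (forall k, (k < c)%N -> diag_entry k = 1) -> (c <= one_count D)%N.
Proof.
move=> cm cn one_lt_c.
have <- : #|[set widen_ord cm k | k : 'I_c]| = c.
  by rewrite card_imset ?card_ord //; move=> a b /(congr1 val) /= /val_inj.
rewrite /one_count; apply: subset_leq_card; apply/subsetP => _ /imsetP[k _ ->].
rewrite inE; apply/existsP; exists (widen_ord cn k).
by rewrite eqxx (@diag_entryE (widen_ord cm k) (widen_ord cn k)) //= one_lt_c.
Qed.

Lemma rank_mod_le_one_count :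
  exists2 p : nat, prime p & (\rank (map_mx (intr : int -> 'F_p) D) <= one_count D)%N.
Proof.
pose not_one k := (r <= k)%N || (diag_entry k != 1).
have not_one_r : not_one r by rewrite /not_one leqnn.
have [c not_one_c c_min] := ex_minnP (ex_intro not_one r not_one_r).
have cr : (c <= r)%N := c_min r not_one_r.
have one_lt_c k : (k < c)%N -> diag_entry k = 1.
  move=> kc; apply/eqP; apply: contraTT kc => dk.
  by rewrite -leqNgt c_min // /not_one dk orbT.
have abs_c_neq1 : `|diag_entry c|%N != 1%N.
  have [rc | cr'] := leqP r c; first by rewrite diag_entry_ge.
  have /gez0_abs abs_c := ltW (diag_entry_gt0 cr').
  by move: not_one_c; rewrite /not_one leqNgt cr' -abs_c -[1]/(1%N : int) eqz_nat.
have [p p_prime p_dvd] := prime_dvdz_nonunit abs_c_neq1.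
exists p => //.
have cm : (c <= m)%N := leq_trans cr r_le_m.
have cn : (c <= n)%N := leq_trans cr r_le_n.
rewrite (@map_diag_pid_mx _ c) // ?rank_pid_mx ?one_count_ge // => k ck.
apply/eqP; rewrite -(dvdz_pcharf (pchar_Fp p_prime)).
have [kr | rk] := ltnP k r; last by rewrite diag_entry_ge ?dvdz0.
exact: dvdz_trans p_dvd (diag_entry_dvd ck kr).
Qed.

End SmithDiagonal.

Lemma snf_diag_rank_mod_le_one_count (m n : nat) (D : 'M[int]_(m, n)) :
  snf_diag D ->
  exists2 p : nat, prime p & (\rank (map_mx (intr : int -> 'F_p) D) <= one_count D)%N.
Proof.
case=> r [r_le D_support D_gt0 D_dvd].
exact: rank_mod_le_one_count r_le D_support D_gt0 D_dvd.
Qed.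

Theorem corollary6p12 (m n d : nat) (A : 'M[int]_(m, n))
    (K : 'M[int]_m) (D : 'M[int]_(m, n)) (L : 'M[int]_n) :
  (0 < d)%N -> (d <= minn m n)%N ->
  is_smith_normal_form A K D L ->
  (exists V : 'M[int]_(m, d),
      (forall j : 'I_d, zspan A (col j V)) /\
      (forall v : 'cV[int]_d, zspan V^T v)) ->
  (d <= one_count D)%N.
Proof.
move=> _ _ [A_KDL _ _ D_snf] [V [V_in_spanA spanVT]].
have [X V_AX] := zspan_cols V_in_spanA.
have [W VTW] := zspan_cols (fun j => spanVT (col j 1%:M)).
have [p _ rank_le] := snf_diag_rank_mod_le_one_count D_snf.
apply: leq_trans rank_le; apply: (mulmx1_le_rank_map _ (P := W^T *m K) (Q := L *m X)).
have := congr1 trmx VTW; rewrite trmx_mul trmxK trmx1 V_AX A_KDL => ->.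
by rewrite !mulmxA.
Qed.
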